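(* Let $D$ be $\mathbb{C}$ or the quaternions $\mathbb{H}$, viewed as a real algebra, and let $n \geq 1$. Let \[ f_n : D^n \times D^n \to D^n,\quad ((a_1,\ldots,a_n),(b_1,\ldots,b_n)) \mapsto (a_1 b_1, \ldots, a_n b_n) \] be componentwise multiplication, regarded as an $\mathbb{R}$-bilinear map. Then $Q(f_n) = n q$, where $q = Q(f_1)$ is the subrank of the multiplication map $D\times D\to D$. (In particular, $Q(f_n)=n$ for $D=\mathbb{C}$ and $Q(f_n)=2n$ for $D=\mathbb{H}$.)
   Context: For an $\mathbb{R}$-bilinear map $f : U \times V \to W$ between finite-dimensional real vector spaces, its subrank $Q(f)$ is the largest $r$ such that there exist $\mathbb{R}$-linear maps $\varphi_1 : \mathbb{R}^r \to U$, $\varphi_2 : \mathbb{R}^r \to V$, $\varphi_3 : W \to \mathbb{R}^r$ with $\varphi_3(f(\varphi_1(a), \varphi_2(b))) = (a_1b_1,\ldots,a_rb_r)$ for all $a,b \in \mathbb{R}^r$. $\mathbb{H}$ denotes Hamilton's quaternions with basis $1,i,j,k$ and $i^2=j^2=k^2=-1$, $ij=k$, $jk=i$, $ki=j$. *)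

From HB Require Import structures.
From mathcomp Require Import all_boot all_order all_algebra.
From mathcomp Require Import reals.
Set Implicit Arguments. Unset Strict Implicit. Unset Printing Implicit Defensive.
Import Order.TTheory GRing.Theory Num.Theory.
Local Open Scope ring_scope.

Section Defs.
Variable R : realType.

Definition subrank_achieves (U V W : lmodType R) (f : U -> V -> W) (r : nat) : Prop :=
  exists (p1 : {linear 'rV[R]_r -> U}) (p2 : {linear 'rV[R]_r -> V})
         (p3 : {linear W -> 'rV[R]_r}),
    forall a b : 'rV[R]_r, p3 (f (p1 a) (p2 b)) = \row_j (a 0 j * b 0 j).

Definition is_subrank (U V W : lmodType R) (f : U -> V -> W) (r : nat) : Prop :=
  subrank_achieves f r /\ forall r', subrank_achieves f r' -> (r' <= r)%N.

Definition crd (d : nat) (x : 'rV[R]_d.+1) (i : nat) : R := x 0 (inord i).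

(* Complex multiplication on R^2 with basis 1, i. *)
Definition cmulC (a b : 'rV[R]_2) : 'rV[R]_2 :=
  \row_(k < 2) nth 0
    [:: crd a 0 * crd b 0 - crd a 1 * crd b 1;
        crd a 0 * crd b 1 + crd a 1 * crd b 0] k.

(* Quaternion multiplication on R^4 with basis 1, i, j, k,
   i^2 = j^2 = k^2 = -1, ij = k, jk = i, ki = j. *)
Definition qmulH (a b : 'rV[R]_4) : 'rV[R]_4 :=
  \row_(k < 4) nth 0
    [:: crd a 0 * crd b 0 - crd a 1 * crd b 1 - crd a 2 * crd b 2 - crd a 3 * crd b 3;
        crd a 0 * crd b 1 + crd a 1 * crd b 0 + crd a 2 * crd b 3 - crd a 3 * crd b 2;
        crd a 0 * crd b 2 - crd a 1 * crd b 3 + crd a 2 * crd b 0 + crd a 3 * crd b 1;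
        crd a 0 * crd b 3 + crd a 1 * crd b 2 - crd a 2 * crd b 1 + crd a 3 * crd b 0] k.

(* D^n is represented as n x d real matrices, row i being the i-th component.
   f_n multiplies componentwise. *)
Definition compmul (d n : nat) (mul : 'rV[R]_d -> 'rV[R]_d -> 'rV[R]_d)
  (A B : 'M[R]_(n, d)) : 'M[R]_(n, d) :=
  \matrix_(i < n, k < d) (mul (row i A) (row i B)) 0 k.

End Defs.
Arguments compmul {R d} n mul A B.

(* The lower bound Q(f_n) >= n q holds because subrank is superadditive under
   direct sums; q >= d/2 is witnessed by the real line in C, and in H by
   (a0 + a1 i)(b0 + b1 j), whose 1- and k-coordinates are a0 b0 and a1 b1.

   The upper bound Q(f_n) <= n d/2 holds for any bilinear product on R^d,
   d = 2e, without zero divisors.  By induction on a set T of components, if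
   f restricted to T computes the unit tensor for all b in Y up to an error
   in Z, then dim Y <= dim Z + e|T|.  Pick a basis vector e_i whose image x
   is nonzero exactly on the components P.  Cutting Y down to the kernel of
   b |-> x * b (on which the components in P vanish, as there are no zero
   divisors), or enlarging Z by the image of the matrices supported on
   T \cap P (of dimension at most 2e|T \cap P|), removes T \cap P; since x
   contributes only the line through e_i, the two inductive bounds add up to
   2 dim Y <= 2 (dim Z + e|T|) + 1. *)

From HB Require Import structures.
From mathcomp Require Import all_boot all_order all_algebra.
From mathcomp Require Import reals.
From mathcomp Require Import zify ring lra.
Set Implicit Arguments. Unset Strict Implicit. Unset Printing Implicit Defensive.
Import Order.TTheory GRing.Theory Num.Theory.
Local Open Scope ring_scope.

Lemma dimv_capDline (K : fieldType) (vT : vectType K) (Z U : {vspace vT}) v :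
  (\dim ((Z + <[v]>) :&: U) <= \dim (Z :&: U) + 1)%N.
Proof.
have := dimvS (addvS (addvSl Z <[v]>) (subvv U)); have := dimv_sum_cap Z <[v]>.
have := dimv_sum_cap (Z + <[v]>) U; have := dimv_sum_cap Z U.
have := dim_vline v; case: (v != 0) => /=; lia.
Qed.

Lemma dimv_lker_limg_line (K : fieldType) (vT wT uT : vectType K)
    (h : 'Hom(vT, wT)) (g : 'Hom(wT, uT)) (Y : {vspace vT}) (M : {vspace wT})
    (Z : {vspace uT}) (v : uT) :
  (h @: Y <= M)%VS -> (g @: (h @: Y) <= Z + <[v]>)%VS ->
  (\dim Y + \dim (Z + g @: M) <= \dim (Y :&: lker h) + \dim M + \dim Z + 1)%N.
Proof.
move=> hYM ghYZ.
have dim_hY : (\dim (h @: Y) <= \dim ((Z + <[v]>) :&: g @: M) + \dim (M :&: lker g))%N.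
  rewrite -(limg_ker_dim g (h @: Y)) addnC leq_add ?dimvS ?capvS //.
  by rewrite subv_cap ghYZ limgS.
have := dimv_capDline Z (g @: M) v; have := dimv_sum_cap Z (g @: M).
have := limg_ker_dim h Y; have := limg_ker_dim g M; lia.
Qed.

Section RowMap.
Variables (K : pzRingType) (n p q : nat) (f : {linear 'rV[K]_p -> 'rV[K]_q}).

Definition rowmap (A : 'M[K]_(n, p)) : 'M[K]_(n, q) := \matrix_i f (row i A).

Fact rowmap_is_semilinear : semilinear rowmap.
Proof.
by split=> [c A|A B]; apply/row_matrixP => i; rewrite rowK !(linearZ, linearD) /= !rowK.
Qed.
HB.instance Definition _ :=
  GRing.isSemilinear.Build K 'M[K]_(n, p) 'M[K]_(n, q) _ rowmap rowmap_is_semilinear.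
End RowMap.

Section DirectSum.
Variables (R : realType) (d n q : nat) (mul : 'rV[R]_d -> 'rV[R]_d -> 'rV[R]_d).

Lemma row_compmul (A B : 'M[R]_(n, d)) i :
  row i (compmul n mul A B) = mul (row i A) (row i B).
Proof. by apply/rowP => k; rewrite !mxE. Qed.

Lemma subrank_achieves_compmul :
  subrank_achieves mul q -> subrank_achieves (compmul n mul) (n * q).
Proof.
case=> p1 [p2 [p3 p_mul]].
exists (rowmap p1 \o vec_mx), (rowmap p2 \o vec_mx), (mxvec \o rowmap p3) => a b /=.
apply/rowP => j; case/(@mxvec_indexP n q): j => i k.
by rewrite mxvecE mxE {1}/rowmap mxE row_compmul !rowK p_mul !mxE.
Qed.
End DirectSum.

Section ComponentwiseProduct.
Variables (R : realType) (d e : nat) (mul : 'rV[R]_d -> 'rV[R]_d -> 'rV[R]_d).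
Hypothesis mul_linear : forall x, linear (mul x).
Hypothesis mul0 : forall y, mul 0 y = 0.
Hypothesis mul_regular : forall x y, x != 0 -> mul x y = 0 -> y = 0.
Hypothesis d_double : d = (e + e)%N.

Lemma mulx0 x : mul x 0 = 0.
Proof. by rewrite -[0 in LHS]subr0 (zmod_morphism_linear (mul_linear x)) subrr. Qed.

Section UpperBound.
Variable n : nat.
Implicit Types (S T P : {set 'I_n}) (A B C : 'M[R]_(n, d)).

Definition compmul_on T A B : 'M[R]_(n, d) :=
  \matrix_i (if i \in T then mul (row i A) (row i B) else 0).

Lemma compmul_on_setT A B : compmul_on setT A B = compmul n mul A B.
Proof. by apply/row_matrixP => i; rewrite rowK in_setT; apply/rowP => k; rewrite !mxE. Qed.

Lemma compmul_on_split T P A B :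
  compmul_on T A B = compmul_on (T :\: P) A B + compmul_on (T :&: P) A B.
Proof.
apply/row_matrixP => i; rewrite linearD /= !rowK in_setD in_setI.
by case: (i \in T); case: (i \in P); rewrite /= ?addr0 ?add0r.
Qed.

Fact compmul_on_is_linear T A : linear (compmul_on T A).
Proof.
move=> c B C; apply/row_matrixP => i; rewrite linearP /= !rowK linearP /=.
by case: (i \in T); rewrite ?mul_linear ?scaler0 ?addr0.
Qed.
HB.instance Definition _ T A :=
  GRing.isLinear.Build R 'M[R]_(n, d) 'M[R]_(n, d) _ (compmul_on T A)
    (compmul_on_is_linear T A).

Definition row_support_space S : {vspace 'M[R]_(n, d)} :=
  <<[seq delta_mx i k | i <- enum S, k <- enum 'I_d]>>%VS.

Lemma dim_row_support_space S : (\dim (row_support_space S) <= #|S| * d)%N.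
Proof.
by apply: leq_trans (dim_span _) _; rewrite size_allpairs size_enum_ord -cardE.
Qed.

Lemma mem_row_support_space S A :
  (forall i, i \notin S -> row i A = 0) -> A \in row_support_space S.
Proof.
move=> A0; rewrite (matrix_sum_delta A); apply: rpred_sum => i _.
apply: rpred_sum => k _; have [iS | iNS] := boolP (i \in S).
  by apply/rpredZ/memv_span/allpairsP; exists (i, k); rewrite /= !mem_enum.
have /rowP/(_ k) := A0 i iNS; rewrite !mxE => ->.
by rewrite scale0r rpred0.
Qed.

Section Approximation.
Variables (r : nat) (p1 p2 : {linear 'rV[R]_r -> 'M[R]_(n, d)}).
Variable p3 : {linear 'M[R]_(n, d) -> 'rV[R]_r}.
Implicit Types (Y Z : {vspace 'rV[R]_r}) (a b : 'rV[R]_r).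

Definition hadamard a b : 'rV[R]_r := \row_j (a 0 j * b 0 j).

Definition approximates T Y Z :=
  forall a b, b \in Y -> p3 (compmul_on T (p1 a) (p2 b)) - hadamard a b \in Z.

Lemma approximates_subv T Y Z :
  (forall i m, m \in T -> row m (p1 'e_i) = 0) ->
  approximates T Y Z -> (Y <= Z)%VS.
Proof.
move=> p1T0 approx; apply/subvP => b Yb.
have p1T0' a m : m \in T -> row m (p1 a) = 0.
  move=> mT; rewrite (row_sum_delta a) !linear_sum big1 // => j _.
  by rewrite !linearZ /= p1T0 // scaler0.
have := approx (const_mx 1) b Yb.
have -> : compmul_on T (p1 (const_mx 1)) (p2 b) = 0.
  by apply/row_matrixP => m; rewrite rowK row0; case: ifP => // /p1T0' ->.
have -> : hadamard (const_mx 1) b = b by apply/rowP => j; rewrite !mxE mul1r.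
by rewrite linear0 sub0r memvN.
Qed.

Section Splitting.
Variables (T : {set 'I_n}) (i : 'I_r).
Let x := p1 'e_i.
Let P := [set m | row m x != 0].
Let h := linfun (compmul_on T x \o p2).
Let g := linfun p3.
Let M := row_support_space (T :&: P).

Lemma approximates_lker Y Z :
  approximates T Y Z -> approximates (T :\: P) (Y :&: lker h) Z.
Proof.
move=> approx a b /memv_capP[Yb]; rewrite memv_ker lfunE /= => /eqP hb0.
suff <- : compmul_on T (p1 a) (p2 b) = compmul_on (T :\: P) (p1 a) (p2 b).
  exact: approx.
rewrite (compmul_on_split T P) -[RHS]addr0; congr (_ + _).
apply/row_matrixP => m; rewrite rowK row0 in_setI inE.
case: (m \in T) / idP => //= mT; case: eqP => // /eqP x_m.
have : row m (compmul_on T x (p2 b)) = 0 by rewrite hb0 row0.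
by rewrite rowK mT => /(mul_regular x_m) ->; rewrite mulx0.
Qed.

Lemma approximates_limg Y Z :
  approximates T Y Z -> approximates (T :\: P) Y (Z + g @: M).
Proof.
move=> approx a b Yb; set c := compmul_on (T :&: P) (p1 a) (p2 b).
have Mc : c \in M.
  by apply: mem_row_support_space => m mTP; rewrite rowK (negbTE mTP).
have -> : p3 (compmul_on (T :\: P) (p1 a) (p2 b)) - hadamard a b =
    p3 (compmul_on T (p1 a) (p2 b)) - hadamard a b - p3 c.
  by rewrite (compmul_on_split T P) linearD addrAC addrK.
apply: memv_add; first exact: approx.
by rewrite memvN -[p3 c](lfunE p3) memv_img.
Qed.

Lemma limg_split_sub Y : (h @: Y <= M)%VS.
Proof.
apply/subvP => _ /memv_imgP[b _ ->]; rewrite lfunE /=.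
apply: mem_row_support_space => m; rewrite rowK in_setI inE negb_and negbK.
by case: (m \in T) => //= /eqP ->; rewrite mul0.
Qed.

Lemma limg_split_line Y Z :
  approximates T Y Z -> (g @: (h @: Y) <= Z + <['e_i]>)%VS.
Proof.
move=> approx; apply/subvP => _ /memv_imgP[_ /memv_imgP[b Yb ->] ->].
rewrite !lfunE /= -(subrK (hadamard 'e_i b) (p3 _)).
apply: memv_add; first exact: approx.
apply/vlineP; exists (b 0 i); apply/rowP => j; rewrite !mxE eqxx /=.
by case: (j =P i) => [->|_]; rewrite ?mul1r ?mulr1 ?mul0r ?mulr0.
Qed.

Lemma approximates_split Y Z :
  (forall Y' Z', approximates (T :\: P) Y' Z' ->
     (\dim Y' <= \dim Z' + e * #|T :\: P|)%N) ->
  approximates T Y Z -> (\dim Y <= \dim Z + e * #|T|)%N.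
Proof.
move=> IH approx.
have dim_ker := IH _ _ (approximates_lker approx).
have dim_img := IH _ _ (approximates_limg approx).
have := dimv_lker_limg_line (limg_split_sub Y) (limg_split_line approx).
have dim_M : (\dim M <= #|T :&: P| * (e + e))%N.
  by rewrite -d_double dim_row_support_space.
move: dim_ker dim_img dim_M; rewrite -(cardsID P T) !mulnDr [(#|_| * e)%N]mulnC.
move: (e * #|T :&: P|)%N (e * #|T :\: P|)%N (\dim Y) (\dim Z) (\dim M).
move: (\dim (Y :&: lker h)) (\dim (Z + g @: M)); lia.
Qed.

End Splitting.

Lemma approximates_dim T Y Z :
  approximates T Y Z -> (\dim Y <= \dim Z + e * #|T|)%N.
Proof.
have [k] := ubnP #|T|; elim: k => // k IH in T Y Z *; rewrite ltnS => leTk approx.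
have [i /existsP[m /andP[mT x_m]] | p1T0] :=
  pickP (fun i => [exists m in T, row m (p1 'e_i) != 0]).
  apply: (approximates_split (i := i)) approx => Y' Z'; apply: IH.
  apply: leq_trans leTk; rewrite -(cardsID [set m | row m (p1 'e_i) != 0] T).
  rewrite -[X in (X < _)%N]add0n ltn_add2r.
  by rewrite card_gt0; apply/set0Pn; exists m; rewrite !inE mT.
apply: leq_trans (leq_addr _ _); apply/dimvS/(approximates_subv _ approx).
move=> i m mT; apply/eqP; apply: contraFT (p1T0 i) => x_m.
by apply/existsP; exists m; rewrite mT.
Qed.

End Approximation.

Lemma subrank_achieves_compmul_le r :
  subrank_achieves (compmul n mul) r -> (r <= e * n)%N.
Proof.
case=> p1 [p2 [p3 p_mul]].
have := @approximates_dim r p1 p2 p3 setT fullv 0%VS.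
rewrite dimvf dimv0 cardsT card_ord /dim /= mul1n; apply=> a b _.
by rewrite compmul_on_setT p_mul subrr mem0v.
Qed.

End UpperBound.

Lemma is_subrank_compmul n :
  subrank_achieves mul e -> is_subrank mul e /\ is_subrank (compmul n mul) (n * e).
Proof.
move=> achieves_e; split; split.
- exact: achieves_e.
- move=> r /(subrank_achieves_compmul 1); rewrite mul1n.
  by move=> /subrank_achieves_compmul_le; rewrite muln1.
- exact: subrank_achieves_compmul.
- by move=> r /subrank_achieves_compmul_le; rewrite mulnC.
Qed.

End ComponentwiseProduct.

Lemma mul_regular_of_conj (K : fieldType) d (mul : 'rV[K]_d -> 'rV[K]_d -> 'rV[K]_d)
    (conj : 'rV[K]_d -> 'rV[K]_d) (nrm : 'rV[K]_d -> K) :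
  (forall x, linear (mul x)) ->
  (forall x y, mul (conj x) (mul x y) = nrm x *: y) ->
  (forall x, nrm x = 0 -> x = 0) ->
  forall x y, x != 0 -> mul x y = 0 -> y = 0.
Proof.
move=> mul_linear mul_conj nrm_eq0 x y x_neq0 xy0; apply/eqP.
have := mul_conj x y; rewrite xy0 -[0 in LHS]subr0.
rewrite (zmod_morphism_linear (mul_linear _)) subrr => /esym/eqP.
by rewrite scaler_eq0 => /orP[/eqP/nrm_eq0/eqP|]; rewrite ?(negbTE x_neq0).
Qed.

Section Coordinates.
Variables (R : realType) (d : nat).
Implicit Types (x y : 'rV[R]_d.+1) (c : R).

Lemma crd_ext x y : (forall i, (i < d.+1)%N -> crd x i = crd y i) -> x = y.
Proof.
by move=> eq_xy; apply/rowP => j; have := eq_xy j (ltn_ord j); rewrite /crd inord_val.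
Qed.

Lemma crd_row_nth (s : seq R) i :
  (i < d.+1)%N -> crd (\row_(k < d.+1) nth 0 s k) i = nth 0 s i.
Proof. by move=> lt_id; rewrite /crd mxE inordK. Qed.

Lemma crdD x y i : crd (x + y) i = crd x i + crd y i.
Proof. by rewrite /crd mxE. Qed.

Lemma crdZ c x i : crd (c *: x) i = c * crd x i.
Proof. by rewrite /crd mxE. Qed.

Lemma crd_rowM x y i : crd (\row_j (x 0 j * y 0 j)) i = crd x i * crd y i.
Proof. by rewrite /crd mxE. Qed.

Lemma crd0 i : crd (0 : 'rV[R]_d.+1) i = 0.
Proof. by rewrite /crd mxE. Qed.

End Coordinates.

Section Complex.
Variable R : realType.
Implicit Types x y : 'rV[R]_2.

Definition cconj x : 'rV[R]_2 := \row_(k < 2) nth 0 [:: crd x 0; - crd x 1] k.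
Definition cnorm x : R := crd x 0 ^+ 2 + crd x 1 ^+ 2.

Lemma cmulC_linear x : linear (@cmulC R x).
Proof.
move=> c y z; apply: crd_ext => -[|[|i]] // _.
all: by rewrite /cmulC !(crdD, crdZ, crd_row_nth) //=; ring.
Qed.

Lemma cmul0C y : @cmulC R 0 y = 0.
Proof.
by apply: crd_ext => -[|[|i]] // _; rewrite /cmulC !(crd0, crd_row_nth) //=; ring.
Qed.

Lemma cmulC_conj x y : cmulC (cconj x) (cmulC x y) = cnorm x *: y.
Proof.
apply: crd_ext => -[|[|i]] // _.
all: by rewrite /cmulC /cconj /cnorm !(crdZ, crd_row_nth) //=; ring.
Qed.

Lemma cnorm_eq0 x : cnorm x = 0 -> x = 0.
Proof.
by rewrite /cnorm => nx0; apply: crd_ext => -[|[|i]] // _; rewrite crd0; nra.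
Qed.

Definition realC (a : 'rV[R]_1) : 'rV[R]_2 := \row_(k < 2) nth 0 [:: crd a 0; 0] k.
Definition reC x : 'rV[R]_1 := \row_(k < 1) nth 0 [:: crd x 0] k.

Fact realC_is_linear : linear realC.
Proof.
move=> c a b; apply: crd_ext => -[|[|i]] // _.
all: by rewrite !(crdD, crdZ, crd_row_nth) //= mulr0 addr0.
Qed.
HB.instance Definition _ := GRing.isLinear.Build R _ _ _ realC realC_is_linear.

Fact reC_is_linear : linear reC.
Proof.
by move=> c x y; apply: crd_ext => -[|i] // _; rewrite !(crdD, crdZ, crd_row_nth).
Qed.
HB.instance Definition _ := GRing.isLinear.Build R _ _ _ reC reC_is_linear.

Lemma subrank_achieves_cmulC : subrank_achieves (@cmulC R) 1.
Proof.
exists realC, realC, reC => a b; apply: crd_ext => -[|i] // _.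
by rewrite crd_rowM /reC /cmulC /realC !crd_row_nth //=; ring.
Qed.

End Complex.

Section Quaternion.
Variable R : realType.
Implicit Types x y : 'rV[R]_4.

Definition qconj x : 'rV[R]_4 :=
  \row_(k < 4) nth 0 [:: crd x 0; - crd x 1; - crd x 2; - crd x 3] k.
Definition qnorm x : R := crd x 0 ^+ 2 + crd x 1 ^+ 2 + crd x 2 ^+ 2 + crd x 3 ^+ 2.

Lemma qmulH_linear x : linear (@qmulH R x).
Proof.
move=> c y z; apply: crd_ext => -[|[|[|[|i]]]] // _.
all: by rewrite /qmulH !(crdD, crdZ, crd_row_nth) //=; ring.
Qed.

Lemma qmul0H y : @qmulH R 0 y = 0.
Proof.
by apply: crd_ext => -[|[|[|[|i]]]] // _; rewrite /qmulH !(crd0, crd_row_nth) //=; ring.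
Qed.

Lemma qmulH_conj x y : qmulH (qconj x) (qmulH x y) = qnorm x *: y.
Proof.
apply: crd_ext => -[|[|[|[|i]]]] // _.
all: by rewrite /qmulH /qconj /qnorm !(crdZ, crd_row_nth) //=; ring.
Qed.

Lemma qnorm_eq0 x : qnorm x = 0 -> x = 0.
Proof.
by rewrite /qnorm => nx0; apply: crd_ext => -[|[|[|[|i]]]] // _; rewrite crd0; nra.
Qed.

Definition embedH (k : nat) (a : 'rV[R]_2) : 'rV[R]_4 :=
  \row_(l < 4) (if l == 0 :> nat then crd a 0 else if l == k :> nat then crd a 1 else 0).
Definition coordsH03 x : 'rV[R]_2 := \row_(k < 2) nth 0 [:: crd x 0; crd x 3] k.

Fact embedH_is_linear k : linear (embedH k).
Proof.
move=> c a b; apply/rowP => l; rewrite !mxE /crd !mxE.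
by case: ifP => _; last case: ifP => _; rewrite ?mulr0 ?addr0.
Qed.
HB.instance Definition _ k := GRing.isLinear.Build R _ _ _ (embedH k) (embedH_is_linear k).

Fact coordsH03_is_linear : linear coordsH03.
Proof.
by move=> c x y; apply: crd_ext => -[|[|i]] // _; rewrite !(crdD, crdZ, crd_row_nth).
Qed.
HB.instance Definition _ := GRing.isLinear.Build R _ _ _ coordsH03 coordsH03_is_linear.

Lemma subrank_achieves_qmulH : subrank_achieves (@qmulH R) 2.
Proof.
exists (embedH 1), (embedH 2), coordsH03 => a b; apply: crd_ext => -[|[|i]] // _.
all: rewrite crd_rowM /coordsH03 /qmulH !crd_row_nth //= /crd !mxE !inordK //=.
all: by rewrite /crd; ring.
Qed.

End Quaternion.

Theorem corollary5p4 (R : realType) (n : nat) : (0 < n)%N ->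
  (exists q : nat, is_subrank (@cmulC R) q /\
                   is_subrank (compmul n (@cmulC R)) (n * q)) /\
  (exists q : nat, is_subrank (@qmulH R) q /\
                   is_subrank (compmul n (@qmulH R)) (n * q)).
Proof.
move=> _; split; [exists 1%N | exists 2%N]; apply: is_subrank_compmul.
- exact: cmulC_linear.
- exact: cmul0C.
- exact: (mul_regular_of_conj (@cmulC_linear R) (@cmulC_conj R) (@cnorm_eq0 R)).
- by [].
- exact: subrank_achieves_cmulC.
- exact: qmulH_linear.
- exact: qmul0H.
- exact: (mul_regular_of_conj (@qmulH_linear R) (@qmulH_conj R) (@qnorm_eq0 R)).
- by [].
- exact: subrank_achieves_qmulH.
Qed.
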